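(* Let $W=\mathfrak{S}_n$, $\ast=\mathrm{id}$, $w\in I_\ast$, and let $(s_{i_1},\dots,s_{i_k},w)$ be a reduced sequence. (1) If $k\ge2$ and $|i_{k-1}-i_k|>1$, then $(s_{i_1},\dots,s_{i_{k-2}},s_{i_k},s_{i_{k-1}},w)$ is a reduced sequence and $s_{i_1}\ltimes\cdots\ltimes s_{i_{k-1}}\ltimes s_{i_k}\ltimes w=s_{i_1}\ltimes\cdots\ltimes s_{i_{k-2}}\ltimes s_{i_k}\ltimes s_{i_{k-1}}\ltimes w$. (2) If $k\ge3$ and $i_{k-2}=i_k=i_{k-1}\pm1$, then $(s_{i_1},\dots,s_{i_{k-3}},s_{i_{k-1}},s_{i_k},s_{i_{k-1}},w)$ is a reduced sequence and $s_{i_1}\ltimes\cdots\ltimes s_{i_{k-3}}\ltimes s_{i_{k-2}}\ltimes s_{i_{k-1}}\ltimes s_{i_k}\ltimes w=s_{i_1}\ltimes\cdots\ltimes s_{i_{k-3}}\ltimes s_{i_{k-1}}\ltimes s_{i_k}\ltimes s_{i_{k-1}}\ltimes w$. (3) If $w=s_{i_k\pm1}$, then $(s_{i_1},\dots,s_{i_{k-1}},s_{i_k\pm1},s_{i_k})$ is a reduced sequence and $s_{i_1}\ltimes\cdots\ltimes s_{i_{k-1}}\ltimes s_{i_k}\ltimes s_{i_k\pm1}=s_{i_1}\ltimes\cdots\ltimes s_{i_{k-1}}\ltimes s_{i_k\pm1}\ltimes s_{i_k}$.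
   Context: $\mathfrak{S}_n$ with $s_i=(i,i+1)$, $S=\{s_1,\dots,s_{n-1}\}$; $I_\ast=\{w\in\mathfrak{S}_n:w^2=1\}$. For $s\in S$, $w\in I_\ast$: $s\ltimes w=sw$ if $sw=ws$, $s\ltimes w=sws$ otherwise (so $s\ltimes1=s$); iterated from the right: $s_{i_1}\ltimes\cdots\ltimes s_{i_k}\ltimes w=s_{i_1}\ltimes(\cdots(s_{i_k}\ltimes w)\cdots)$, and an expression ending in $s_{i_k}$ means ending in $s_{i_k}\ltimes1$. $\rho(w)$ is the minimal $k$ such that $w=s_{i_1}\ltimes\cdots\ltimes s_{i_k}\ltimes1$ for some $s_{i_j}\in S$. A sequence $(s_{i_1},\dots,s_{i_k},w)$ with $w\in I_\ast$ is reduced if $\rho(s_{i_1}\ltimes\cdots\ltimes s_{i_k}\ltimes w)=\rho(w)+k$. *)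

From Stdlib Require Import ClassicalEpsilon.
From mathcomp Require Import all_boot all_fingroup.
Set Implicit Arguments. Unset Strict Implicit. Unset Printing Implicit Defensive.
Local Open Scope group_scope.

(* Generators of S_n, 1-based as in the paper: s_i = (i, i+1), valid for
   1 <= i <= n-1.  With 0-based points 'I_n, s_i swaps points i-1 and i. *)
Definition validS (n i : nat) : bool := (0 < i < n)%N.

Definition sgen (n i : nat) : {perm 'I_n} :=
  match n return {perm 'I_n} with
  | 0 => 1
  | n'.+1 => tperm (@inord n' i.-1) (@inord n' i)
  end.

(* I_* = involutions (ast = id) *)
Definition is_involution n (w : {perm 'I_n}) : bool := w * w == 1.

Definition ltimes n (s w : {perm 'I_n}) : {perm 'I_n} :=
  if s * w == w * s then s * w else s * w * s.

(* s_{i_1} ⋉ ... ⋉ s_{i_k} ⋉ w, iterated from the right; l = [:: i_1; ...; i_k] *)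
Definition tact n (l : seq nat) (w : {perm 'I_n}) : {perm 'I_n} :=
  foldr (fun i u => ltimes (sgen n i) u) w l.

Definition reachable_in n (k : nat) (w : {perm 'I_n}) : Prop :=
  exists l : seq nat, size l = k /\ all (validS n) l /\ w = tact l 1.

Definition reachb n (w : {perm 'I_n}) (k : nat) : bool :=
  if excluded_middle_informative (reachable_in k w) then true else false.

(* rho(w): the minimal such k (0 by convention if none exists; this never
   happens for involutions). *)
Definition rho n (w : {perm 'I_n}) : nat :=
  match excluded_middle_informative (exists k, reachb w k) with
  | left h => ex_minn h
  | right _ => 0
  end.

Definition reduced n (l : seq nat) (w : {perm 'I_n}) : Prop :=
  [/\ is_involution w, all (validS n) l & rho (tact l w) = rho w + size l].

From Stdlib Require Import ClassicalEpsilon.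
From mathcomp Require Import all_boot all_fingroup zify.
Set Implicit Arguments. Unset Strict Implicit. Unset Printing Implicit Defensive.
Local Open Scope group_scope.

(* For involutions
   [s != t] with [s t s = t s t], either [s ⋉ t ⋉ s ⋉ u = t ⋉ s ⋉ t ⋉ u] or
   [s ⋉ t ⋉ u = t ⋉ s ⋉ u].  This property is symmetric in [s], [t] and invariant
   under [u |-> s ⋉ u], so it suffices to treat the case where [s] commutes with
   [u] and the case where none of [s], [t], [s t s] does (then every step is a
   conjugation); both only use that conjugation preserves commutation.  For
   generators of S_n the second alternative turns [s ⋉ t ⋉ s ⋉ w] into [t ⋉ w],
   which would make a reduced word two letters too long. *)

Section TwistedAction.

Variable gT : finGroupType.
Implicit Types s t u g : gT.

Definition twist s u : gT := if s * u == u * s then s * u else s * u * s.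

Lemma twist_commute s u : commute s u -> twist s u = s * u.
Proof. by rewrite /twist => /eqP ->. Qed.

Lemma twist_noncommute s u : ~ commute s u -> twist s u = s * u * s.
Proof. by rewrite /twist => /eqP/negbTE ->. Qed.

Lemma twist_conj s u : s^-1 = s -> ~ commute s u -> twist s u = u ^ s.
Proof. by move=> sV /twist_noncommute ->; rewrite conjgE sV mulgA. Qed.

Lemma commuteJ s u g : commute (s ^ g) (u ^ g) <-> commute s u.
Proof.
rewrite /commute -!conjMg; split=> [|-> //].
exact: conjg_inj.
Qed.

Lemma commuteJr s u g : commute s (u ^ g) <-> commute (s ^ g^-1) u.
Proof. by rewrite -(commuteJ (s ^ g^-1) u g) conjgKV. Qed.

Lemma conjg_commute s u : commute u s -> u ^ s = u.
Proof. by move=> us; rewrite conjgE us mulKg. Qed.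

Lemma twistK s u : s^-1 = s -> twist s (twist s u) = u.
Proof.
move=> sV; have [csu | ncsu] := eqVneq (s * u) (u * s).
  have cs_su : commute s (s * u) by exact: commuteM (commute_refl s) csu.
  by rewrite !twist_commute // mulgA -{1}sV mulVg mul1g.
have {}ncsu : ~ commute s u by apply/eqP.
rewrite (twist_conj sV ncsu) twist_conj //; first by rewrite -{2}sV conjgK.
by rewrite commuteJr conjgE invgK mulgV mulg1.
Qed.

Lemma commuteMl s t u : commute s t -> commute s (t * u) <-> commute s u.
Proof.
by move=> st; rewrite /commute mulgA st -!mulgA; split=> [/mulgI | ->].
Qed.

Lemma commuteJl s t u : commute s t -> commute s (t * u * t) <-> commute s u.
Proof.
move=> st; rewrite -mulgA commuteMl // /commute mulgA -[u * t * s]mulgA -st mulgA.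
by split=> [/mulIg | ->].
Qed.

Lemma twistCA s t u : commute s t -> twist s (twist t u) = twist t (twist s u).
Proof.
move=> st; have ts := commute_sym st.
have [csu | /eqP ncsu] := eqVneq (s * u) (u * s);
have [ctu | /eqP nctu] := eqVneq (t * u) (u * t).
- by rewrite !twist_commute ?commuteMl // !mulgA st.
- rewrite (twist_commute csu) (twist_noncommute nctu).
  rewrite twist_commute ?commuteJl // twist_noncommute ?commuteMl //.
  by rewrite !mulgA st.
- rewrite (twist_noncommute ncsu) (twist_commute ctu).
  rewrite twist_noncommute ?commuteMl // twist_commute ?commuteJl //.
  by rewrite !mulgA st.
- rewrite (twist_noncommute ncsu) (twist_noncommute nctu).
  rewrite !twist_noncommute ?commuteJl // !mulgA st -!mulgA.
  by rewrite [t * s]ts.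
Qed.

Definition braid_or_commute s t u : Prop :=
  twist s (twist t (twist s u)) = twist t (twist s (twist t u))
  \/ twist s (twist t u) = twist t (twist s u).

Lemma braid_or_commuteC s t u : braid_or_commute s t u -> braid_or_commute t s u.
Proof. by rewrite /braid_or_commute => -[-> | ->]; [left | right]. Qed.

Lemma braid_or_commute_twist s t u : s^-1 = s -> t^-1 = t ->
  braid_or_commute s t (twist s u) -> braid_or_commute s t u.
Proof.
move=> sV tV; case; rewrite twistK // => e; [left | right].
  by rewrite e twistK.
by rewrite -e twistK.
Qed.

End TwistedAction.

Section TwistBraid.

Variables (gT : finGroupType) (s t : gT).
Hypotheses (sV : s^-1 = s) (tV : t^-1 = t) (st_braid : s * t * s = t * s * t).
Hypothesis s_neq_t : s != t.

Let ss : s * s = 1. Proof. by rewrite -{1}sV mulVg. Qed.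
Let tt : t * t = 1. Proof. by rewrite -{1}tV mulVg. Qed.

Lemma noncommute_braid : ~ commute s t.
Proof.
move=> st; move/eqP: s_neq_t; apply.
by have := st_braid; rewrite st -mulgA ss mulg1 -mulgA st mulgA tt mul1g => ->.
Qed.

Lemma conjg_braid : s ^ t = t ^ s.
Proof. by rewrite !conjgE sV tV !mulgA st_braid. Qed.

Lemma conjg_braidM : s ^ (t * s) = t.
Proof. by rewrite conjgM conjg_braid -conjgM ss conjg1. Qed.

Lemma commute_braid_or_commute u : commute s u -> braid_or_commute s t u.
Proof.
move=> su; have [tu | /eqP ntu] := eqVneq (t * u) (u * t).
  have nstu : ~ commute s (t * u).
    move=> h; apply: noncommute_braid; apply: (mulIg u).
    by rewrite -[s * t * u]mulgA h -[t * u * s]mulgA -su mulgA.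
  have ntsu : ~ commute t (s * u).
    move=> h; apply: noncommute_braid; apply: (mulIg u).
    by rewrite -[t * s * u]mulgA h -[s * u * t]mulgA -tu mulgA.
  right; rewrite (twist_commute su) (twist_commute tu).
  by rewrite !twist_noncommute // -!mulgA -su -tu !mulgA st_braid.
have nstu : ~ commute s (u ^ t).
  rewrite commuteJr tV conjg_braid -(commuteJ _ _ s) -conjgM ss conjg1.
  by rewrite conjgE sV -su mulgA ss mul1g.
have ttsu : commute t (u ^ (t * s)).
  by rewrite commuteJr invMg sV tV conjgM -conjg_braid -conjgM tt conjg1.
rewrite /braid_or_commute (twist_conj tV ntu) (twist_conj sV nstu) -conjgM.
rewrite (twist_commute ttsu) (twist_commute su).
have [tsu | /eqP ntsu] := eqVneq (t * (s * u)) (s * u * t).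
  right; rewrite (twist_commute tsu).
  have ut : u ^ t = s ^ t * (s * u).
    have : (s * u) ^ t = s * u by rewrite conjgE tV -tsu mulgA tt mul1g.
    by rewrite conjMg => e; rewrite -e mulgA -conjMg ss conj1g mul1g.
  rewrite conjgM ut conjMg -conjgM conjg_braidM conjMg conjg_commute //.
  by rewrite conjg_commute // commute_sym.
have nssut : ~ commute s ((s * u) ^ t).
  rewrite commuteJr tV -(commuteJ _ _ s) -conjgM conjg_braidM.
  by rewrite conjMg conjg_commute // conjg_commute.
left; rewrite (twist_conj tV ntsu) (twist_conj sV nssut) -conjgM.
by rewrite conjMg conjg_braidM.
Qed.

End TwistBraid.

Lemma twist_braid_or_commute (gT : finGroupType) (s t u : gT) :
  s^-1 = s -> t^-1 = t -> s * t * s = t * s * t -> s != t ->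
  braid_or_commute s t u.
Proof.
move=> sV tV sts s_neq_t; have tst := esym sts; have t_neq_s := s_neq_t.
rewrite eq_sym in t_neq_s.
have [su | /eqP nsu] := eqVneq (s * u) (u * s).
  exact: commute_braid_or_commute.
have [tu | /eqP ntu] := eqVneq (t * u) (u * t).
  exact/braid_or_commuteC/(commute_braid_or_commute tV sV tst t_neq_s).
have ts_conj := esym (conjg_braid sV tV sts).
have [ru | /eqP nru] := eqVneq (s ^ t * u) (u * s ^ t).
  apply: braid_or_commute_twist => //; rewrite (twist_conj sV nsu).
  apply/braid_or_commuteC/(commute_braid_or_commute tV sV tst t_neq_s).
  by rewrite commuteJr sV ts_conj.
have ntus : ~ commute t (u ^ s) by rewrite commuteJr sV ts_conj.
have nsut : ~ commute s (u ^ t) by rewrite commuteJr tV.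
have nsust : ~ commute s (u ^ (s * t)).
  by rewrite commuteJr invMg sV tV (conjg_braidM sV tV sts).
have ntuts : ~ commute t (u ^ (t * s)).
  by rewrite commuteJr invMg sV tV (conjg_braidM tV sV tst).
left; rewrite (twist_conj sV nsu) (twist_conj tV ntu) (twist_conj tV ntus).
rewrite (twist_conj sV nsut) -!conjgM (twist_conj sV nsust) (twist_conj tV ntuts).
by rewrite -!conjgM sts.
Qed.

Lemma twist_braid_or_degenerate (gT : finGroupType) (s t u : gT) :
  s^-1 = s -> t^-1 = t -> s * t * s = t * s * t -> s != t ->
  twist s (twist t (twist s u)) = twist t (twist s (twist t u))
  \/ twist s (twist t (twist s u)) = twist t u.
Proof.
move=> sV tV sts s_neq_t.
case: (twist_braid_or_commute u sV tV sts s_neq_t) => [-> | e]; first by left.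
by right; rewrite -e twistK.
Qed.

Lemma twist_braid_swap (gT : finGroupType) (s t : gT) :
  s^-1 = s -> t^-1 = t -> s * t * s = t * s * t -> s != t -> twist s t = twist t s.
Proof.
move=> sV tV sts s_neq_t; have nst := noncommute_braid sV tV sts s_neq_t.
rewrite !twist_noncommute // => ts; exact/nst/esym.
Qed.

Lemma tperm_braid (T : finType) (x y z : T) : x != y -> y != z -> x != z ->
  tperm x y * tperm y z * tperm x y = tperm y z * tperm x y * tperm y z.
Proof.
move=> xy yz xz; have J (a b : T) c : tperm a b * c * tperm a b = c ^ tperm a b.
  by rewrite conjgE tpermV mulgA.
by rewrite !J !tpermJ tpermR tpermL !tpermD // eq_sym.
Qed.

Lemma tperm_commute (T : finType) (x y z t : T) :
  z != x -> t != x -> z != y -> t != y -> commute (tperm x y) (tperm z t).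
Proof. by move=> zx tx zy ty; rewrite /commute conjgC tpermJ !tpermD. Qed.

Lemma tperm_neq1 (T : finType) (x y : T) : x != y -> tperm x y != 1.
Proof.
move=> xy; apply/eqP => /permP/(_ x); rewrite tpermL perm1 => yx.
by rewrite yx eqxx in xy.
Qed.

Lemma tperm_overlap_neq (T : finType) (x y z : T) :
  x != y -> x != z -> tperm x y != tperm y z.
Proof.
move=> xy xz; apply/eqP => /permP/(_ x); rewrite tpermL tpermD 1?eq_sym // => yx.
by rewrite yx eqxx in xy.
Qed.

Lemma ltimesE n (s u : {perm 'I_n}) : ltimes s u = twist s u.
Proof. by []. Qed.

Lemma inord_eq n x y : x <= n -> y <= n -> (@inord n x == @inord n y) = (x == y).
Proof.
move=> xn yn; apply/eqP/eqP => [e | -> //].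
by rewrite -(inordK xn) -(inordK yn) e.
Qed.

Lemma sgenV n i : (sgen n i)^-1 = sgen n i.
Proof. by case: n => [|n] /=; rewrite ?invg1 ?tpermV. Qed.

Lemma sgen_neq1 n i : validS n i -> sgen n i != 1.
Proof.
case: n => [|n] /andP[i0 iN] //=; apply: tperm_neq1.
by rewrite inord_eq; lia.
Qed.

Lemma sgen_far_commute n i j : validS n i -> validS n j -> i.+1 < j ->
  commute (sgen n i) (sgen n j).
Proof.
case: n => [|n] /andP[i0 iN] /andP[j0 jN] // ij /=.
by apply: tperm_commute; rewrite inord_eq; lia.
Qed.

Lemma sgen_succ n i : validS n i -> validS n i.+1 ->
  exists x y z : 'I_n,
    [/\ x != y, y != z, x != z, sgen n i = tperm x y & sgen n i.+1 = tperm y z].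
Proof.
case: n => [|n] /andP[i0 _] /andP[_ iN] //.
by exists (inord i.-1), (inord i), (inord i.+1); rewrite !inord_eq; first split=> //; lia.
Qed.

Lemma sgen_braid n i j : validS n i -> validS n j -> (j = i.+1 \/ j.+1 = i) ->
  sgen n i * sgen n j * sgen n i = sgen n j * sgen n i * sgen n j.
Proof.
move=> vi vj [ji | ij]; subst.
  by have [x [y [z [xy yz xz -> ->]]]] := sgen_succ vi vj; exact: tperm_braid.
by have [x [y [z [xy yz xz -> ->]]]] := sgen_succ vj vi; rewrite tperm_braid.
Qed.

Lemma sgen_neq n i j : validS n i -> validS n j -> (j = i.+1 \/ j.+1 = i) ->
  sgen n i != sgen n j.
Proof.
move=> vi vj [ji | ij]; subst.
  by have [x [y [z [xy _ xz -> ->]]]] := sgen_succ vi vj; exact: tperm_overlap_neq.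
by have [x [y [z [xy _ xz -> ->]]]] := sgen_succ vj vi; rewrite eq_sym tperm_overlap_neq.
Qed.

Lemma sgen_involution n i : is_involution (sgen n i).
Proof. by rewrite /is_involution -{1}sgenV mulVg. Qed.

Lemma tact_cat n p q (v : {perm 'I_n}) : tact (p ++ q) v = tact p (tact q v).
Proof. by rewrite /tact foldr_cat. Qed.

Lemma tact_rev n q (v : {perm 'I_n}) : tact (rev q) (tact q v) = v.
Proof.
elim: q v => [//|i q IHq] v.
by rewrite rev_cons -cats1 tact_cat /= !ltimesE twistK ?sgenV.
Qed.

Lemma tact_braid_or_degenerate n (w : {perm 'I_n}) b c :
  validS n b -> validS n c -> (c = b.+1 \/ c.+1 = b) ->
  tact [:: c; b; c] w = tact [:: b; c; b] w \/ tact [:: c; b; c] w = tact [:: b] w.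
Proof.
move=> vb vc bc; rewrite /tact /= !ltimesE.
apply: twist_braid_or_degenerate; rewrite ?sgenV //.
  exact/esym/sgen_braid.
by rewrite eq_sym sgen_neq.
Qed.

Section Rho.

Variable n : nat.
Implicit Types (u v w : {perm 'I_n}) (q : seq nat).

Lemma reachbE u k : reachb u k <-> reachable_in k u.
Proof. by rewrite /reachb; case: excluded_middle_informative. Qed.

Lemma rho_le u k : reachable_in k u -> rho u <= k.
Proof.
move=> uk; rewrite /rho; case: excluded_middle_informative => [ex | nex].
  by case: ex_minnP => m _; apply; apply/reachbE.
by case: nex; exists k; apply/reachbE.
Qed.

Lemma rho_reachable u k : reachable_in k u -> reachable_in (rho u) u.
Proof.
move=> uk; rewrite /rho; case: excluded_middle_informative => [ex | nex].
  by case: ex_minnP => m /reachbE.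
by case: nex; exists k; apply/reachbE.
Qed.

Lemma reachable_rho_gt0 u : 0 < rho u -> exists k, reachable_in k u.
Proof.
rewrite /rho; case: excluded_middle_informative => // [[k /reachbE]] uk _.
by exists k.
Qed.

Lemma reachable_tact k q v : reachable_in k v -> all (validS n) q ->
  reachable_in (k + size q) (tact q v).
Proof.
move=> [l [sl [vl ->]]] vq; exists (q ++ l).
by rewrite size_cat all_cat vq vl tact_cat sl addnC.
Qed.

Lemma rho_tact_le q w : (exists k, reachable_in k w) -> all (validS n) q ->
  rho (tact q w) <= rho w + size q.
Proof. by move=> [k /rho_reachable wk] vq; apply/rho_le/reachable_tact. Qed.

Lemma rho_sgen i : validS n i -> rho (sgen n i) = 1%N.
Proof.
move=> vi; have r1 : reachable_in 1%N (sgen n i).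
  by exists [:: i]; rewrite /= vi /tact /= ltimesE twist_commute ?mulg1 //; exact: commute1.
apply/eqP; rewrite eqn_leq rho_le //= lt0n; apply/eqP => r0.
have := rho_reachable r1; rewrite r0 => -[l [/size0nil -> [_ e]]].
by move/eqP: (sgen_neq1 vi).
Qed.

Lemma reduced_size_le q q' w : reduced q w -> 0 < size q ->
  all (validS n) q' -> tact q' w = tact q w -> size q <= size q'.
Proof.
move=> [_ vq hr] q_gt0 vq' e.
have [k qk] : exists k, reachable_in k (tact q w).
  by apply: reachable_rho_gt0; rewrite hr addn_gt0 q_gt0 orbT.
have wr : exists k, reachable_in k w.
  exists (k + size (rev q)); rewrite -(tact_rev q w).
  by apply: reachable_tact; rewrite ?all_rev.
by rewrite -(leq_add2l (rho w)) -hr -e rho_tact_le.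
Qed.

Lemma reduced_tact_eq q q' w : reduced q w -> all (validS n) q' ->
  size q' = size q -> tact q' w = tact q w -> reduced q' w.
Proof. by move=> [iw _ hr] vq' sq e; split; rewrite // e hr sq. Qed.

End Rho.

Theorem lemma2p13 (n : nat) (w : {perm 'I_n}) (l : seq nat) :
  is_involution w -> reduced l w ->
  [/\ (* (1) *)
      (forall (p : seq nat) (a b : nat),
         l = p ++ [:: a; b] -> (a.+1 < b \/ b.+1 < a)%N ->
         reduced (p ++ [:: b; a]) w /\ tact (p ++ [:: a; b]) w = tact (p ++ [:: b; a]) w),
      (* (2) *)
      (forall (p : seq nat) (a b c : nat),
         l = p ++ [:: a; b; c] -> a = c -> (c = b.+1 \/ c.+1 = b) ->
         reduced (p ++ [:: b; c; b]) w /\ tact (p ++ [:: a; b; c]) w = tact (p ++ [:: b; c; b]) w)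
    & (* (3) *)
      (forall (p : seq nat) (a j : nat),
         l = rcons p a -> (j = a.+1 \/ j.+1 = a) -> validS n j -> w = sgen n j ->
         reduced (rcons p j) (sgen n a) /\ tact (rcons p a) (sgen n j) = tact (rcons p j) (sgen n a))].
Proof.
move=> _ red; have [_ vl hr] := red; split.
- move=> p a b el ab; subst l; move: vl; rewrite all_cat /= andbT => /and3P[vp va vb].
  have e : tact (p ++ [:: a; b]) w = tact (p ++ [:: b; a]) w.
    rewrite !tact_cat /tact /= !ltimesE twistCA //.
    by case: ab => ab; [apply: sgen_far_commute | apply/commute_sym/sgen_far_commute].
  split=> //; apply: (reduced_tact_eq red); rewrite ?size_cat //.
  by rewrite all_cat vp /= va vb.
- move=> p a b c el ac bc; subst l a; move: vl.
  rewrite all_cat /= andbT => /and4P[vp vc vb _].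
  have e : tact [:: c; b; c] w = tact [:: b; c; b] w.
    have [// | e] := tact_braid_or_degenerate w vb vc bc.
    suff : size (p ++ [:: c; b; c]) <= size (p ++ [:: b]) by rewrite !size_cat /=; lia.
    apply: (reduced_size_le red); first by rewrite size_cat addn3.
      by rewrite all_cat vp /= vb.
    by rewrite !tact_cat e.
  have e' : tact (p ++ [:: c; b; c]) w = tact (p ++ [:: b; c; b]) w by rewrite !tact_cat e.
  split=> //; apply: (reduced_tact_eq red); rewrite ?size_cat //.
  by rewrite all_cat vp /= vb vc.
- move=> p a j el aj vj wj; subst l w; move: vl; rewrite all_rcons => /andP[va vp].
  have e : tact (rcons p a) (sgen n j) = tact (rcons p j) (sgen n a).
    rewrite -!cats1 !tact_cat /tact /= !ltimesE twist_braid_swap ?sgenV //.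
      exact: sgen_braid.
    exact: sgen_neq.
  split=> //; split; first exact: sgen_involution.
    by rewrite all_rcons vj vp.
  by rewrite -e hr !rho_sgen // !size_rcons.
Qed.
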